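(* For every integer $n\ge 2$ and every real $x>0$, $$\bigl(\psi_2^{(n)}(x+1)\bigr)^2\le \psi_2^{(n)}(x)\,\psi_2^{(n)}(x+2).$$
   Context: For an integer $n\ge 2$ and $x>0$, the poly-double gamma function is defined by $$\psi_2^{(n)}(x)=(-1)^{n+1}\,n!\sum_{k=0}^{\infty}\frac{1+k}{(x+k)^{n+1}} .$$ *)

From Stdlib Require Import Reals.
From Coquelicot Require Import Coquelicot.
Open Scope R_scope.

(* For n >= 2 and x > 0 the series converges (terms ~ k^{-n}), so
   Coquelicot's total [Series] is its actual sum. *)
Definition psi2 (n : nat) (x : R) : R :=
  (-1) ^ (n + 1) * INR (Factorial.fact n) *
  Series (fun k : nat => (1 + INR k) / (x + INR k) ^ (n + 1)).

(** Each term [(1 + k) / (y + k)^(n+1)] is log-convex in [y], because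
    [(y + k) (y + k + 2) <= (y + k + 1)^2]; hence the termwise inequality
    [b_k^2 <= a_k c_k] holds for the series at [x], [x + 1], [x + 2], and the
    Cauchy-Schwarz inequality for series (the quadratic
    [sum (t^2 a_k - 2 t b_k + c_k)] is nonnegative for every [t]) transfers it
    to the sums.  The prefactor [(-1)^(n+1) n!] appears squared on both sides. *)

From Stdlib Require Import Reals Lra Lia.
From Coquelicot Require Import Coquelicot.
Open Scope R_scope.

Lemma discriminant_le_of_quadratic_ge0 (A B C : R) :
  0 <= A -> (forall t, 0 <= t * t * A - 2 * t * B + C) -> B ^ 2 <= A * C.
Proof.
  intros HA Hq.
  destruct (Rle_lt_or_eq_dec 0 A HA) as [HApos | HA0].
  - specialize (Hq (B / A)).
    replace (B / A * (B / A) * A - 2 * (B / A) * B + C)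
      with ((A * C - B ^ 2) / A) in Hq by (field; lra).
    assert (Hmul : A * ((A * C - B ^ 2) / A) = A * C - B ^ 2) by (field; lra).
    nra.
  - subst A.
    destruct (Req_dec B 0) as [HB0 | HB0]; [subst B; lra|].
    specialize (Hq ((C + 1) / (2 * B))).
    replace ((C + 1) / (2 * B) * ((C + 1) / (2 * B)) * 0
             - 2 * ((C + 1) / (2 * B)) * B + C) with (-1) in Hq
      by (field; lra).
    lra.
Qed.

Lemma quadratic_ge0_of_sqr_le (a b c t : R) :
  0 <= a -> 0 <= c -> b ^ 2 <= a * c -> 0 <= t * t * a - 2 * t * b + c.
Proof.
  intros Ha Hc Hb.
  destruct (Rle_lt_or_eq_dec 0 a Ha) as [Hapos | Ha0].
  - apply Rmult_le_reg_l with (r := a); [exact Hapos|].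
    replace (a * (t * t * a - 2 * t * b + c)) with ((t * a - b) ^ 2 + (a * c - b ^ 2))
      by ring.
    pose proof (pow2_ge_0 (t * a - b)); lra.
  - subst a. nra.
Qed.

Lemma Series_ge0 (a : nat -> R) : (forall k, 0 <= a k) -> ex_series a -> 0 <= Series a.
Proof.
  intros Ha Hex.
  apply Rle_trans with (Series (fun k => 0 * a k)); [rewrite Series_scal_l; lra|].
  apply Series_le; [intro k; rewrite Rmult_0_l; split; [lra | apply Ha] | exact Hex].
Qed.

Lemma Series_sqr_le_mul (a b c : nat -> R) :
  (forall k, 0 <= a k) -> (forall k, 0 <= c k) ->
  (forall k, b k ^ 2 <= a k * c k) ->
  ex_series a -> ex_series b -> ex_series c ->
  Series b ^ 2 <= Series a * Series c.
Proof.
  intros Ha Hc Hb Exa Exb Exc.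
  apply discriminant_le_of_quadratic_ge0; [exact (Series_ge0 a Ha Exa)|].
  intro t.
  set (q := fun k => t * t * a k - 2 * t * b k + c k).
  assert (Hq : is_series q (t * t * Series a - 2 * t * Series b + Series c)).
  { apply (is_series_plus (fun k => t * t * a k - 2 * t * b k) c);
      [apply (is_series_minus (fun k => t * t * a k) (fun k => 2 * t * b k)) |];
      [apply (is_series_scal_l (t * t) a) | apply (is_series_scal_l (2 * t) b) |];
      apply Series_correct; assumption. }
  rewrite <- (is_series_unique q _ Hq).
  apply Series_ge0; [| eexists; exact Hq].
  intro k; apply quadratic_ge0_of_sqr_le; auto.
Qed.

Lemma is_series_inv_consecutive :
  is_series (fun k => / ((INR k + 1) * (INR k + 2))) 1.
Proof.
  assert (Hsum : forall n, sum_n (fun k => / ((INR k + 1) * (INR k + 2))) n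
                           = 1 - / (INR n + 2)).
  { induction n as [|n IH].
    - rewrite sum_O; simpl; field.
    - rewrite sum_Sn, IH, S_INR; simpl.
      assert (0 <= INR n) by apply pos_INR.
      change (plus ?u ?v) with (u + v).
      field; lra. }
  assert (Hlim : is_lim_seq (fun n => 1 - / (INR n + 2)) 1).
  { eapply is_lim_seq_minus; [apply is_lim_seq_const | |].
    - apply (is_lim_seq_inv _ p_infty); [|discriminate].
      eapply is_lim_seq_plus; [apply is_lim_seq_INR | apply is_lim_seq_const | reflexivity].
    - unfold is_Rbar_minus, is_Rbar_plus; simpl; f_equal; f_equal; ring. }
  exact (is_lim_seq_ext _ _ 1 (fun n => eq_sym (Hsum n)) Hlim).
Qed.

Definition psi2_term (m : nat) (y : R) (k : nat) : R := (1 + INR k) / (y + INR k) ^ m.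

Lemma psi2_term_pos (m : nat) (y : R) (k : nat) : 0 < y -> 0 < psi2_term m y k.
Proof.
  intros Hy; unfold psi2_term.
  assert (0 <= INR k) by apply pos_INR.
  apply Rdiv_lt_0_compat; [lra | apply pow_lt; lra].
Qed.

Lemma psi2_term_succ_le (m : nat) (y : R) (k : nat) : 0 < y -> (3 <= m)%nat ->
  psi2_term m y (S k) <= 4 / ((INR k + 1) * (INR k + 2)).
Proof.
  intros Hy Hm; unfold psi2_term; rewrite S_INR.
  assert (0 <= INR k) by apply pos_INR.
  set (t := INR k + 1) in *.
  replace (INR k + 2) with (t + 1) by (unfold t; ring).
  assert (Ht : 1 <= t) by (unfold t; lra).
  assert (Hpow : t ^ 3 <= (y + t) ^ m).
  { apply Rle_trans with (t ^ m); [apply Rle_pow; auto | apply pow_incr; lra]. }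
  assert (Ht3 : 0 < t ^ 3) by (apply pow_lt; lra).
  apply Rle_trans with ((1 + t) / t ^ 3).
  - apply Rmult_le_compat_l; [lra | apply Rinv_le_contravar; auto].
  - apply Rmult_le_reg_r with (r := t ^ 3 * (t * (t + 1))); [nra|].
    unfold Rdiv; field_simplify; nra.
Qed.

Lemma ex_series_psi2_term (m : nat) (y : R) : 0 < y -> (3 <= m)%nat ->
  ex_series (psi2_term m y).
Proof.
  intros Hy Hm.
  apply ex_series_incr_1.
  apply (@ex_series_le R_AbsRing R_CompleteNormedModule _
           (fun k => 4 * / ((INR k + 1) * (INR k + 2)))).
  - intro k; change (Rabs (psi2_term m y (S k)) <= 4 * / ((INR k + 1) * (INR k + 2))).
    rewrite Rabs_pos_eq by (apply Rlt_le, psi2_term_pos; exact Hy).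
    apply psi2_term_succ_le; assumption.
  - exists (4 * 1).
    apply (is_series_scal_l 4 (fun k => / ((INR k + 1) * (INR k + 2))) 1).
    exact is_series_inv_consecutive.
Qed.

Lemma inv_pow_log_convex (m : nat) (p : R) : 0 < p ->
  (/ (p + 1) ^ m) ^ 2 <= / p ^ m * / (p + 2) ^ m.
Proof.
  intros Hp.
  assert (Hmid : p ^ m * (p + 2) ^ m <= (p + 1) ^ m * (p + 1) ^ m).
  { rewrite <- !Rpow_mult_distr; apply pow_incr; nra. }
  assert (0 < p ^ m) by (apply pow_lt; lra).
  assert (0 < (p + 2) ^ m) by (apply pow_lt; lra).
  assert (0 < (p + 1) ^ m) by (apply pow_lt; lra).
  replace ((/ (p + 1) ^ m) ^ 2) with (/ ((p + 1) ^ m * (p + 1) ^ m)) by (field; lra).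
  rewrite <- Rinv_mult.
  apply Rinv_le_contravar; [nra | exact Hmid].
Qed.

Lemma psi2_term_log_convex (m : nat) (y : R) (k : nat) : 0 < y ->
  psi2_term m (y + 1) k ^ 2 <= psi2_term m y k * psi2_term m (y + 2) k.
Proof.
  intros Hy; unfold psi2_term, Rdiv.
  assert (0 <= INR k) by apply pos_INR.
  replace (y + 1 + INR k) with ((y + INR k) + 1) by ring.
  replace (y + 2 + INR k) with ((y + INR k) + 2) by ring.
  rewrite Rpow_mult_distr.
  replace ((1 + INR k) * / (y + INR k) ^ m * ((1 + INR k) * / (y + INR k + 2) ^ m))
    with ((1 + INR k) ^ 2 * (/ (y + INR k) ^ m * / (y + INR k + 2) ^ m)) by ring.
  apply Rmult_le_compat_l; [apply pow2_ge_0 | apply inv_pow_log_convex; lra].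
Qed.

Lemma Series_psi2_term_log_convex (m : nat) (y : R) : 0 < y -> (3 <= m)%nat ->
  Series (psi2_term m (y + 1)) ^ 2
  <= Series (psi2_term m y) * Series (psi2_term m (y + 2)).
Proof.
  intros Hy Hm.
  apply Series_sqr_le_mul.
  - intro k; apply Rlt_le, psi2_term_pos; exact Hy.
  - intro k; apply Rlt_le, psi2_term_pos; lra.
  - intro k; apply psi2_term_log_convex; exact Hy.
  - apply ex_series_psi2_term; [exact Hy | exact Hm].
  - apply ex_series_psi2_term; [lra | exact Hm].
  - apply ex_series_psi2_term; [lra | exact Hm].
Qed.

Theorem corollary2p2 (n : nat) (x : R) :
  (2 <= n)%nat -> 0 < x ->
  (psi2 n (x + 1)) ^ 2 <= psi2 n x * psi2 n (x + 2).
Proof.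
  intros Hn Hx.
  pose proof (Series_psi2_term_log_convex (n + 1) x Hx ltac:(lia)) as Hseries.
  change (psi2 n ?y) with
    ((-1) ^ (n + 1) * INR (Factorial.fact n) * Series (psi2_term (n + 1) y)).
  set (K := (-1) ^ (n + 1) * INR (Factorial.fact n)).
  set (A := Series (psi2_term (n + 1) x)) in *.
  set (B := Series (psi2_term (n + 1) (x + 1))) in *.
  set (C := Series (psi2_term (n + 1) (x + 2))) in *.
  replace ((K * B) ^ 2) with (K ^ 2 * B ^ 2) by ring.
  replace (K * A * (K * C)) with (K ^ 2 * (A * C)) by ring.
  apply Rmult_le_compat_l; [apply pow2_ge_0 | exact Hseries].
Qed.
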